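(* Let $\beta\ne0$, $H\ge2$, and $\Delta_{\min}>0$. (i) If $|\beta|(H-1)\ge\log 4$, $H\ge2$, $\Delta_{\min}\le\frac{1}{8|\beta|}$, and $K\asymp\frac{1}{|\beta|^2\Delta_{\min}^2}(e^{|\beta|(H-1)}-1)$, then for any algorithm there is an episodic MDP with horizon $H$ and minimal cascaded gap $\Delta_{\min}$ on which $\mathbb{E}[\mathcal{R}(K)]\gtrsim\frac{e^{|\beta|(H-1)}-1}{|\beta|^2\Delta_{\min}}$. (ii) If $|\beta|(H-1)\le\log H$, $H\ge8$, $\Delta_{\min}\le\frac{1}{4|\beta|H}(e^{|\beta|(H-1)}-1)$, and $K\asymp\frac{1}{H|\beta|^2\Delta_{\min}^2}(e^{|\beta|(H-1)}-1)^2$, then for any algorithm there is an episodic MDP with horizon $H$ and minimal cascaded gap $\Delta_{\min}$ on which $\mathbb{E}[\mathcal{R}(K)]\gtrsim\frac{H}{\Delta_{\min}}$.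
   Context: Episodic finite-horizon tabular MDP: finite states $\mathcal{S}$, finite actions $\mathcal{A}$, horizon $H$, $K$ episodes, transitions $\mathcal{P}_h(\cdot\mid s,a)$, deterministic rewards $r_h:\mathcal{S}\times\mathcal{A}\to[0,1]$, fixed initial state $s_1$. For a policy $\pi=(\pi_h:\mathcal{S}\to\mathcal{A})$ and risk parameter $\beta\ne0$: $V_h^\pi(s)=\frac1\beta\log\mathbb{E}[e^{\beta\sum_{i=h}^H r_i(s_i,\pi_i(s_i))}\mid s_h=s]$, $Q_h^\pi(s,a)$ the same with $a_h=a$ and $\pi$ thereafter; $V_h^*=\sup_\pi V_h^\pi$ attained by an optimal $\pi^*$, $Q^*_h=Q_h^{\pi^*}$. An algorithm chooses policy $\pi^k$ in episode $k$ based on past observations; regret $\mathcal{R}(K)=\sum_{k=1}^K(V_1^*-V_1^{\pi^k})(s_1)$. For a trajectory $\tau\in(\mathcal{S}\times\mathcal{A})^H$ with prefixes $\tau_h$ and $R(\tau_h)=\sum_{j\le h}r_j(s_j,a_j)$, $R(\tau_0)=0$, the cascaded gap is $\Delta_h(s,a;\tau_{h-1})=\psi_\beta e^{\beta R(\tau_{h-1})}[e^{\beta V^*_h(s)}-e^{\beta Q^*_h(s,a)}]$ with $\psi_\beta=1/\beta$ for $\beta>0$ and $e^{-\beta H}/\beta$ for $\beta<0$; the minimal cascaded gap $\Delta_{\min}$ is its minimal nonzero value over $(h,s,a,\tau)$. $x\gtrsim y$ means $x\ge cy$ for a universal $c>0$, and $x\asymp y$ means both $\lesssim$ and $\gtrsim$.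 *)

From HB Require Import structures.
From mathcomp Require Import all_boot all_order all_algebra.
From mathcomp Require Import all_classical all_reals all_analysis.
Set Implicit Arguments. Unset Strict Implicit. Unset Printing Implicit Defensive.
Import Order.TTheory GRing.Theory Num.Theory.
Local Open Scope ring_scope.
Local Open Scope classical_set_scope.

(* Episodic finite-horizon tabular MDP.  Steps are indexed 0..H-1
   (step h of the paper is the ordinal h-1).  *)

Section Types.
Variables (R : realType) (S A : finType) (H : nat).

Definition policy := {ffun 'I_H -> {ffun S -> A}}.

(* what the learner observes in one episode: its policy, the visited
   states (actions are pi_h(s_h)) and the obtained rewards *)
Definition obs := (policy * {ffun 'I_H -> S} * {ffun 'I_H -> R})%type.

(* a (possibly randomized) learning algorithm: given the history of past
   episodes it draws the policy of the next episode from a distribution *)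
Definition valid_alg (alg : seq obs -> policy -> R) : Prop :=
  forall hist, (forall pi, 0 <= alg hist pi) /\ \sum_(pi : policy) alg hist pi = 1.

(* transitions P h s a s' = P_h(s'|s,a), deterministic rewards in [0,1] *)
Definition valid_mdp (P : 'I_H -> S -> A -> S -> R) (r : 'I_H -> S -> A -> R) : Prop :=
  (forall h s a s', 0 <= P h s a s') /\
  (forall h s a, \sum_(s' : S) P h s a s' = 1) /\
  (forall h s a, 0 <= r h s a <= 1).
End Types.

Section MDP.
Variables (R : realType) (S A : finType) (H : nat) (beta : R).
Variables (P : 'I_H -> S -> A -> S -> R) (r : 'I_H -> S -> A -> R).

(* EW pi m h s = E[ exp(beta * sum_{i >= h} r_i(s_i, pi_i(s_i))) | s_h = s ]
   (m is recursion fuel, m = H suffices; for h >= H the sum is empty). *)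
Fixpoint EW (pi : policy S A H) (m h : nat) (s : S) : R :=
  match m with
  | 0 => 1
  | m'.+1 =>
    match (insub h : option 'I_H) with
    | Some i => let a := pi i s in
        expR (beta * r i s a) * \sum_(s' : S) P i s a s' * EW pi m' h.+1 s'
    | None => 1
    end
  end.

Definition Vpi (pi : policy S A H) (h : nat) (s : S) : R := ln (EW pi H h s) / beta.

Definition Vstar (h : nat) (s : S) : R := sup (range (fun pi : policy S A H => Vpi pi h s)).

(* Q_h^*(s,a) = Q_h^{pi*}(s,a) for an optimal pi*, i.e.
   (1/beta) log( e^{beta r_h(s,a)} E_{s'~P_h(.|s,a)}[ e^{beta V^*_{h+1}(s')} ] ). *)
Definition Qstar (i : 'I_H) (s : S) (a : A) : R :=
  ln (expR (beta * r i s a) *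
      \sum_(s' : S) P i s a s' * expR (beta * Vstar i.+1 s')) / beta.

Definition psi_beta : R :=
  if 0 < beta then beta^-1 else expR (- beta * H%:R) / beta.

(* cascaded gap Delta_h(s,a; tau_{h-1}); the prefix reward is the sum of
   rewards of the pairs of tau at steps strictly before h *)
Definition cgap (i : 'I_H) (s : S) (a : A) (tau : {ffun 'I_H -> S * A}) : R :=
  psi_beta * expR (beta * \sum_(j < H | (j < i)%N) r j (tau j).1 (tau j).2) *
  (expR (beta * Vstar i s) - expR (beta * Qstar i s a)).

Definition is_min_cgap (D : R) : Prop :=
  (exists i s a tau, cgap i s a tau != 0 /\ cgap i s a tau = D) /\
  (forall i s a tau, cgap i s a tau != 0 -> D <= cgap i s a tau).

(* next state of a state trajectory (default irrelevant, only used for i+1<H) *)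
Definition nxt (tau : {ffun 'I_H -> S}) (i : 'I_H) : S :=
  match (insub i.+1 : option 'I_H) with Some j => tau j | None => tau i end.

Definition trajprob (s1 : S) (pi : policy S A H) (tau : {ffun 'I_H -> S}) : R :=
  (if [forall i : 'I_H, (val i == 0%N) ==> (tau i == s1)] then 1 else 0) *
  \prod_(i : 'I_H | (i.+1 < H)%N) P i (tau i) (pi i (tau i)) (nxt tau i).

Definition obs_rew (pi : policy S A H) (tau : {ffun 'I_H -> S}) : {ffun 'I_H -> R} :=
  [ffun i => r i (tau i) (pi i (tau i))].

(* ExpReg alg s1 k hist = expected regret of the remaining k episodes,
   given the history hist: E[ sum_k (V_1^* - V_1^{pi^k})(s_1) ]. *)
Fixpoint ExpReg (alg : seq (obs R S A H) -> policy S A H -> R) (s1 : S)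
  (k : nat) (hist : seq (obs R S A H)) : R :=
  match k with
  | 0 => 0
  | k'.+1 => \sum_(pi : policy S A H) alg hist pi *
      ((Vstar 0 s1 - Vpi pi 0 s1) +
       \sum_(tau : {ffun 'I_H -> S}) trajprob s1 pi tau *
          ExpReg alg s1 k' (rcons hist (pi, tau, obs_rew pi tau)))
  end.

End MDP.

(* Two-point argument.  In the hard instance the agent chooses, in the first step, how likely
   it is to enter an absorbing state paying reward 1 per step; the two instances differ only in
   which action raises this probability, by some eps.  Every policy has regret at least
   Delta ~ D in one of the two instances, while the law of a trajectory changes little: its
   Bhattacharyya coefficient is rho >= 1 - O(eps^2 e^{|beta|(H-1)}).  The overlap of the laws
   of the whole history thus decays at most like rho^m, so during m episodes the two expected
   regrets add up to at least Delta m (rho^m - 1/2).  The cascaded gap of the instance is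
   eps (e^{|beta|(H-1)} - 1) / |beta|; taking it equal to D and m ~ K ~ 1 / (eps^2 e^{|beta|(H-1)})
   episodes gives both regimes of the theorem. *)

From HB Require Import structures.
From mathcomp Require Import all_boot all_order all_algebra.
From mathcomp Require Import all_classical all_reals all_analysis.
From mathcomp Require Import ring lra.
Import Order.TTheory GRing.Theory Num.Theory.
Set Implicit Arguments. Unset Strict Implicit. Unset Printing Implicit Defensive.
Local Open Scope ring_scope.

Lemma sqrt_mul_le_mid (R : rcfType) (a b : R) : 0 <= a -> 0 <= b ->
  Num.sqrt (a * b) <= (a + b) / 2.
Proof.
move=> a0 b0; rewrite -(ger0_norm (_ : 0 <= (a + b) / 2)); last by lra.
by rewrite -sqrtr_sqr ler_sqrt ?sqr_ge0 //; exact: (leif_AGM2 a b).1.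
Qed.

Lemma bhattacharyya_le1 (R : rcfType) (p q : R) : 0 <= p <= 1 -> 0 <= q <= 1 ->
  Num.sqrt (p * q) + Num.sqrt ((1 - p) * (1 - q)) <= 1.
Proof.
move=> /andP [p_ge0 p_le1] /andP [q_ge0 q_le1].
have := sqrt_mul_le_mid p_ge0 q_ge0.
have := @sqrt_mul_le_mid _ (1 - p) (1 - q) ltac:(lra) ltac:(lra).
lra.
Qed.

Lemma sqrt_mul_sub_le (R : rcfType) (a b : R) : 0 <= a -> 0 <= b ->
  Num.sqrt (a * b) - (a + b) / 4 <= a.
Proof.
move=> a0 b0.
have := @sqrt_mul_le_mid _ (2 * a) (b / 2) ltac:(lra) ltac:(lra).
by rewrite (_ : 2 * a * (b / 2) = a * b); [lra | field].
Qed.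

Lemma le_mix_sqrt_mul (R : rcfType) (D a b x y : R) :
  0 <= D -> 0 <= a -> 0 <= b -> 0 <= x -> 0 <= y -> D <= x \/ D <= y ->
  D * (Num.sqrt (a * b) - (a + b) / 4) <= a * x + b * y.
Proof.
move=> D0 a0 b0 x0 y0 [Dx|Dy].
- have le_a : D * (Num.sqrt (a * b) - (a + b) / 4) <= D * a.
    by apply: ler_wpM2l => //; apply: sqrt_mul_sub_le.
  by have := mulr_ge0 b0 y0; nra.
- have le_b : D * (Num.sqrt (a * b) - (a + b) / 4) <= D * b.
    by apply: ler_wpM2l => //; rewrite [a * b]mulrC [a + b]addrC; apply: sqrt_mul_sub_le.
  by have := mulr_ge0 a0 x0; nra.
Qed.

Lemma sum_pair3 (V : nmodType) (I J L : finType) (F : I * (J * L) -> V) :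
  \sum_p F p = \sum_i \sum_j \sum_l F (i, (j, l)).
Proof.
under [RHS]eq_bigr do rewrite pair_bigA /=.
by rewrite pair_bigA; apply: eq_bigr => -[i []].
Qed.

Section TwoPointMethod.
Variables (R : realType) (S A : finType) (H : nat) (beta : R).
Variables (r : 'I_H -> S -> A -> R) (alg : seq (obs R S A H) -> policy S A H -> R).
Variable s1 : S.
Hypothesis alg_valid : valid_alg alg.

Local Notation traj := {ffun 'I_H -> S}.
Local Notation hist := (seq (obs R S A H)).

Let alg_ge0 hs pi : 0 <= alg hs pi. Proof. exact: (alg_valid hs).1. Qed.
Let sum_alg hs : \sum_pi alg hs pi = 1. Proof. exact: (alg_valid hs).2. Qed.

Definition next_hist (I : finType) (h : I -> hist) (p : I * (policy S A H * traj)) : hist :=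
  rcons (h p.1) (p.2.1, p.2.2, obs_rew r p.2.1 p.2.2).

Section OneMDP.
Variable P : 'I_H -> S -> A -> S -> R.

Definition regret (pi : policy S A H) : R := Vstar beta P r 0 s1 - Vpi beta P r pi 0 s1.

Definition next_weight (I : finType) (h : I -> hist) (a : I -> R)
    (p : I * (policy S A H * traj)) : R :=
  a p.1 * alg (h p.1) p.2.1 * trajprob P s1 p.2.1 p.2.2.

Local Notation ExpReg := (ExpReg beta P r alg s1).

Lemma sum_ExpReg_S (I : finType) (h : I -> hist) (a : I -> R) k :
  \sum_i a i * ExpReg k.+1 (h i) =
  \sum_i a i * \sum_pi alg (h i) pi * regret pi +
  \sum_p next_weight h a p * ExpReg k (next_hist h p).
Proof.
rewrite sum_pair3 -big_split /=; apply: eq_bigr => i _.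
rewrite !big_distrr -big_split /=; apply: eq_bigr => pi _.
rewrite /regret mulrDr mulrDr mulrA; congr (_ + _).
by rewrite !big_distrr; apply: eq_bigr => tau _; rewrite /next_weight /=; ring.
Qed.

Hypothesis trajprob_ge0 : forall pi tau, 0 <= trajprob P s1 pi tau.
Hypothesis sum_trajprob_le1 : forall pi, \sum_tau trajprob P s1 pi tau <= 1.
Hypothesis regret_ge0 : forall pi, 0 <= regret pi.

Lemma next_weight_ge0 (I : finType) (h : I -> hist) (a : I -> R) :
  (forall i, 0 <= a i) -> forall p, 0 <= next_weight h a p.
Proof.
by move=> a_ge0 p; apply: mulr_ge0; [apply: mulr_ge0; [exact: a_ge0|]|].
Qed.

Lemma sum_next_weight_le (I : finType) (h : I -> hist) (a : I -> R) :
  (forall i, 0 <= a i) -> \sum_p next_weight h a p <= \sum_i a i.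
Proof.
move=> a_ge0; rewrite sum_pair3; apply: ler_sum => i _.
rewrite -[a i]mulr1 -(sum_alg (h i)) big_distrr; apply: ler_sum => pi _ /=.
rewrite /next_weight /= -big_distrr /= -mulrA ler_wpM2l //.
by rewrite -[X in _ <= X]mulr1 ler_wpM2l.
Qed.

Lemma ExpReg_monotone k K hs : (k <= K)%N -> ExpReg k hs <= ExpReg K hs.
Proof.
have step k' hs' : ExpReg k' hs' <= ExpReg k'.+1 hs'.
  elim: k' hs' => [|k' IH] hs' /=.
    apply: sumr_ge0 => pi _; apply: mulr_ge0 => //.
    apply: addr_ge0; first exact: regret_ge0.
    by apply: sumr_ge0 => tau _; apply: mulr_ge0.
  apply: ler_sum => pi _; rewrite ler_wpM2l // lerD2l.
  by apply: ler_sum => tau _; rewrite ler_wpM2l.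
move=> /subnK <-; elim: (K - k)%N => [|d IHd] //.
by apply: le_trans IHd _; rewrite addSn.
Qed.

End OneMDP.

Section TwoPoint.
Variables (P0 P1 : 'I_H -> S -> A -> S -> R) (Delta rho : R).
Hypotheses (Delta_ge0 : 0 <= Delta) (rho_ge0 : 0 <= rho) (rho_le1 : rho <= 1).
Hypothesis trajprob0_ge0 : forall pi tau, 0 <= trajprob P0 s1 pi tau.
Hypothesis trajprob1_ge0 : forall pi tau, 0 <= trajprob P1 s1 pi tau.
Hypothesis sum_trajprob0_le1 : forall pi, \sum_tau trajprob P0 s1 pi tau <= 1.
Hypothesis sum_trajprob1_le1 : forall pi, \sum_tau trajprob P1 s1 pi tau <= 1.
Hypothesis regret0_ge0 : forall pi, 0 <= regret P0 pi.
Hypothesis regret1_ge0 : forall pi, 0 <= regret P1 pi.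
Hypothesis regret_separated : forall pi, Delta <= regret P0 pi \/ Delta <= regret P1 pi.
Hypothesis bhattacharyya_ge :
  forall pi, rho <= \sum_tau Num.sqrt (trajprob P0 s1 pi tau * trajprob P1 s1 pi tau).

Lemma regret_mix_ge (I : finType) (h : I -> hist) (a b : I -> R) :
  (forall i, 0 <= a i) -> (forall i, 0 <= b i) ->
  Delta * (\sum_i Num.sqrt (a i * b i) - (\sum_i a i + \sum_i b i) / 4) <=
  \sum_i a i * \sum_pi alg (h i) pi * regret P0 pi +
  \sum_i b i * \sum_pi alg (h i) pi * regret P1 pi.
Proof.
move=> a_ge0 b_ge0.
have -> : Delta * (\sum_i Num.sqrt (a i * b i) - (\sum_i a i + \sum_i b i) / 4) =
    \sum_i Delta * (Num.sqrt (a i * b i) - (a i + b i) / 4).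
  by rewrite -big_distrr sumrB -mulr_suml big_split.
rewrite -big_split /=; apply: ler_sum => i _.
rewrite -[X in X <= _]mul1r -{1}(sum_alg (h i)) big_distrl /=.
rewrite !big_distrr -big_split /=; apply: ler_sum => pi _.
rewrite !mulrA -![_ * alg _ _]mulrC -!mulrA -mulrDr ler_wpM2l //.
exact: le_mix_sqrt_mul.
Qed.

Lemma bhattacharyya_next_weight (I : finType) (h : I -> hist) (a b : I -> R) :
  (forall i, 0 <= a i) -> (forall i, 0 <= b i) ->
  rho * \sum_i Num.sqrt (a i * b i) <=
  \sum_p Num.sqrt (next_weight P0 h a p * next_weight P1 h b p).
Proof.
move=> a_ge0 b_ge0; rewrite sum_pair3 big_distrr /=; apply: ler_sum => i _.
rewrite -[X in X <= _]mul1r -{1}(sum_alg (h i)) !big_distrl /=; apply: ler_sum => pi _.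
have -> : \sum_tau Num.sqrt (next_weight P0 h a (i, (pi, tau)) *
                               next_weight P1 h b (i, (pi, tau))) =
    alg (h i) pi * Num.sqrt (a i * b i) *
    \sum_tau Num.sqrt (trajprob P0 s1 pi tau * trajprob P1 s1 pi tau).
  rewrite big_distrr; apply: eq_bigr => tau _ /=; rewrite /next_weight /=.
  rewrite (_ : _ * _ = alg (h i) pi ^+ 2 * (a i * b i) *
                       (trajprob P0 s1 pi tau * trajprob P1 s1 pi tau)); last by ring.
  rewrite sqrtrM; last by rewrite mulr_ge0 ?sqr_ge0 // mulr_ge0.
  by rewrite (sqrtrM _ (sqr_ge0 _)) sqrtr_sqr ger0_norm.
by rewrite -mulrA ler_wpM2l // mulrC ler_wpM2l ?sqrtr_ge0.
Qed.

Local Notation ExpReg0 := (ExpReg beta P0 r alg s1).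
Local Notation ExpReg1 := (ExpReg beta P1 r alg s1).

(* a i and b i weigh the history h i under the two instances.  Their overlap sqrt (a i * b i)
   shrinks by at most the factor rho per episode, and on the overlap the algorithm pays regret
   Delta in one of the two instances. *)
Lemma ExpReg_two_point_mix k (I : finType) (h : I -> hist) (a b : I -> R) :
  (forall i, 0 <= a i) -> (forall i, 0 <= b i) ->
  Delta * k%:R *
    (rho ^+ k * \sum_i Num.sqrt (a i * b i) - (\sum_i a i + \sum_i b i) / 4) <=
  \sum_i a i * ExpReg0 k (h i) + \sum_i b i * ExpReg1 k (h i).
Proof.
elim: k I h a b => [|k IH] I h a b a_ge0 b_ge0.
  by rewrite mulr0 mul0r !big1 ?addr0 // => i _; rewrite mulr0.
have a'_ge0 := next_weight_ge0 trajprob0_ge0 h a_ge0.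
have b'_ge0 := next_weight_ge0 trajprob1_ge0 h b_ge0.
rewrite !sum_ExpReg_S addrACA.
apply: le_trans (lerD (regret_mix_ge h a_ge0 b_ge0) (IH _ (next_hist h) _ _ a'_ge0 b'_ge0)).
set B := \sum_i Num.sqrt (a i * b i); set M := \sum_i a i + \sum_i b i.
have B_ge0 : 0 <= B by apply: sumr_ge0 => i _; apply: sqrtr_ge0.
have rhok_ge0 : 0 <= rho ^+ k by apply: exprn_ge0.
have now_le : Delta * (rho ^+ k.+1 * B - M / 4) <= Delta * (B - M / 4).
  by rewrite ler_wpM2l // lerD2r ler_piMl // exprn_ile1.
have next_le : Delta * k%:R * (rho ^+ k.+1 * B - M / 4) <=
    Delta * k%:R * (rho ^+ k * \sum_p Num.sqrt (next_weight P0 h a p * next_weight P1 h b p) -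
      (\sum_p next_weight P0 h a p + \sum_p next_weight P1 h b p) / 4).
  rewrite ler_wpM2l ?mulr_ge0 // lerB //.
    by rewrite exprSr -mulrA ler_wpM2l // bhattacharyya_next_weight.
  by rewrite ler_pM2r // lerD // sum_next_weight_le.
by rewrite -natr1 [Delta * (_ + 1)]mulrDr mulr1 mulrDl addrC lerD.
Qed.

Lemma ExpReg_two_point m :
  Delta * m%:R * (rho ^+ m - 1 / 2) <= ExpReg0 m [::] + ExpReg1 m [::].
Proof.
have := ExpReg_two_point_mix m (fun _ : 'I_1 => [::]) (fun _ => ler01) (fun _ => ler01).
by rewrite !big_ord1 !mul1r sqrtr1 mulr1 (_ : (1 + 1) / 4 = 2^-1 :> R) //; field.
Qed.

Lemma ExpReg_two_point_ge m K : (m <= K)%N -> 3 / 4 <= rho ^+ m ->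
  Delta * m%:R / 8 <= ExpReg0 K [::] \/ Delta * m%:R / 8 <= ExpReg1 K [::].
Proof.
move=> mK rho_m.
have sum_ge : Delta * m%:R / 4 <= ExpReg0 m [::] + ExpReg1 m [::].
  by apply: le_trans (ExpReg_two_point m); rewrite ler_wpM2l ?mulr_ge0 //; lra.
have := ExpReg_monotone trajprob0_ge0 regret0_ge0 [::] mK.
have := ExpReg_monotone trajprob1_ge0 regret1_ge0 [::] mK.
have [E0_ge|E0_lt] := lerP (Delta * m%:R / 8) (ExpReg0 m [::]); [left | right]; lra.
Qed.

End TwoPoint.
End TwoPointMethod.

Lemma sup_range_max (R : realType) (T : Type) (f : T -> R) t0 :
  (forall t, f t <= f t0) -> sup (range f) = f t0.
Proof.
move=> f_le; apply/le_anti/andP; split.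
  by apply: ge_sup; [exists (f t0), t0 | move=> y [t _ <-]].
by apply: ub_le_sup; [exists (f t0) => y [t _ <-] | exists t0].
Qed.

Lemma EW_S (R : realType) (S A : finType) (H : nat) (beta : R)
    (P : 'I_H -> S -> A -> S -> R) (r : 'I_H -> S -> A -> R) pi m h s :
  EW beta P r pi m.+1 h s =
  if (insub h : option 'I_H) is Some i then
    expR (beta * r i s (pi i s)) * \sum_s' P i s (pi i s) s' * EW beta P r pi m h.+1 s'
  else 1.
Proof. by []. Qed.

Section HardInstance.
Variables (R : realType) (n : nat) (beta c0 pg pb : R) (x : bool).
Hypothesis beta_neq0 : beta != 0.
Local Notation H := n.+2.

Definition good_prob (a : bool) : R := if a == x then pg else pb.

(* Steps are numbered from 0.  At step 0 the reward is c0 and action a leads to state true with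
   probability good_prob a; afterwards the state never changes and true pays 1 per step. *)
Definition hardP : 'I_H -> bool -> bool -> bool -> R := fun i s a s' =>
  if val i == 0%N then (if s' then good_prob a else 1 - good_prob a)
  else if s' == s then 1 else 0.

Definition hardr : 'I_H -> bool -> bool -> R := fun i s a =>
  if val i == 0%N then c0 else if s then 1 else 0.

(* exp (beta * V_0) when state true is reached with probability q *)
Definition start_mgf (q : R) : R :=
  expR (beta * c0) * (q * expR (beta * (n.+1)%:R) + (1 - q)).

Definition const_policy (a : bool) : policy bool bool H := [ffun _ => [ffun _ => a]].

Lemma hardP_0 (i : 'I_H) s a s' :
  val i = 0%N -> hardP i s a s' = if s' then good_prob a else 1 - good_prob a.
Proof. by rewrite /hardP => ->. Qed.

Lemma hardP_tail (i : 'I_H) s a s' :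
  val i != 0%N -> hardP i s a s' = if s' == s then 1 else 0.
Proof. by rewrite /hardP => /negbTE ->. Qed.

Lemma hardr_0 (i : 'I_H) s a : val i = 0%N -> hardr i s a = c0.
Proof. by rewrite /hardr => ->. Qed.

Lemma hardr_tail (i : 'I_H) s a : val i != 0%N -> hardr i s a = if s then 1 else 0.
Proof. by rewrite /hardr => /negbTE ->. Qed.

Lemma EW_tail (pi : policy bool bool H) m h s : (1 <= h)%N -> (H - h <= m)%N ->
  EW beta hardP hardr pi m h s = if s then expR (beta * (H - h)%:R) else 1.
Proof.
elim: m h s => [|m IH] h s h_ge1 hm /=.
  by move: hm; rewrite leqn0 => /eqP ->; rewrite mulr0 expR0 if_same.
case: insubP => [i _ vi|h_ge]; last first.
  by rewrite (_ : H - h = 0)%N ?mulr0 ?expR0 ?if_same //; apply/eqP; rewrite subn_eq0 leqNgt.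
have i_neq0 : val i != 0%N by rewrite vi -lt0n.
have hm' : (H - h.+1 <= m)%N by rewrite subnS; move: hm; case: (H - h)%N.
rewrite hardr_tail // big_bool /= !hardP_tail // !IH //.
have -> : (H - h = (H - h.+1).+1)%N by rewrite subnSK // -vi ltn_ord.
rewrite -[(H - h.+1).+1]addn1 natrD.
by case: s; rewrite /= ?mul0r ?add0r ?mul1r ?addr0 ?mulr0 ?expR0 ?mulr1 // mulrDr mulr1 expRD mulrC.
Qed.

Lemma Vpi_tail (pi : policy bool bool H) h s : (1 <= h)%N ->
  Vpi beta hardP hardr pi h s = if s then (H - h)%:R else 0.
Proof.
move=> h_ge1; rewrite /Vpi EW_tail ?leq_subr //.
by case: s; rewrite ?expRK ?ln1 ?mul0r // mulrC mulKf.
Qed.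

Lemma Vpi_0 (pi : policy bool bool H) s :
  Vpi beta hardP hardr pi 0 s = ln (start_mgf (good_prob (pi ord0 s))) / beta.
Proof.
rewrite /Vpi EW_S; case: insubP => [i _ vi|]; last by [].
rewrite (_ : i = ord0); last exact: val_inj.
rewrite hardr_0 // big_bool !hardP_0 // !EW_tail //= subSS subn0.
by rewrite /start_mgf mulr1.
Qed.

Lemma Vstar_tail h s : (1 <= h)%N -> Vstar beta hardP hardr h s = if s then (H - h)%:R else 0.
Proof.
move=> h_ge1; rewrite /Vstar (@sup_range_max _ _ _ (const_policy x)) ?Vpi_tail //.
by move=> pi; rewrite !Vpi_tail.
Qed.

Hypothesis good_better : ln (start_mgf pb) / beta <= ln (start_mgf pg) / beta.

Lemma Vstar_0 s : Vstar beta hardP hardr 0 s = ln (start_mgf pg) / beta.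
Proof.
rewrite /Vstar (@sup_range_max _ _ _ (const_policy x)).
  by rewrite Vpi_0 /const_policy !ffunE /good_prob eqxx.
by move=> pi; rewrite !Vpi_0 /const_policy !ffunE /good_prob eqxx; case: (_ == x).
Qed.

Lemma Qstar_0 s a : Qstar beta hardP hardr ord0 s a = ln (start_mgf (good_prob a)) / beta.
Proof.
rewrite /Qstar hardr_0 // big_bool !hardP_0 // !Vstar_tail //= subSS subn0.
by rewrite /start_mgf mulr0 expR0 mulr1.
Qed.

Lemma Qstar_tail (i : 'I_H) s a : val i != 0%N ->
  Qstar beta hardP hardr i s a = Vstar beta hardP hardr i s.
Proof.
move=> i_neq0; rewrite /Qstar hardr_tail // big_bool !hardP_tail // !Vstar_tail ?lt0n //.
have -> : (H - i = (H - i.+1).+1)%N by rewrite subnSK.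
rewrite -[(H - i.+1).+1]addn1 natrD.
case: s; rewrite /= ?mul0r ?add0r ?mul1r ?addr0 ?mulr0 ?expR0 ?mulr1 ?ln1 ?mul0r //.
by rewrite -(expRD beta) expRK -{1}[beta]mulr1 -mulrDr mulrC mulKf // addrC.
Qed.

Hypothesis pg01 : 0 <= pg <= 1.
Hypothesis pb01 : 0 <= pb <= 1.

Lemma good_prob01 a : 0 <= good_prob a <= 1.
Proof. by rewrite /good_prob; case: (a == x). Qed.

Lemma start_mgf_gt0 q : 0 <= q <= 1 -> 0 < start_mgf q.
Proof.
case/andP=> q_ge0 q_le1; rewrite /start_mgf mulr_gt0 ?expR_gt0 //.
have E_gt0 := expR_gt0 (beta * (n.+1)%:R).
case: (ltrP q 1) => q1; first by have := mulr_ge0 q_ge0 (ltW E_gt0); lra.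
by rewrite (_ : q = 1) ?mul1r ?subrr ?addr0 //; apply/le_anti/andP.
Qed.

Lemma cgap_tail i s a tau : val i != 0%N -> cgap beta hardP hardr i s a tau = 0.
Proof. by move=> i_neq0; rewrite /cgap Qstar_tail // subrr mulr0. Qed.

Lemma cgap_0 i s a tau : val i = 0%N ->
  cgap beta hardP hardr i s a tau = psi_beta H beta * (start_mgf pg - start_mgf (good_prob a)).
Proof.
move=> i0; rewrite (_ : i = ord0); last exact: val_inj.
rewrite /cgap Qstar_0 big_pred0 // mulr0 expR0 mulr1 Vstar_0.
have expK y : 0 < y -> expR (beta * (ln y / beta)) = y.
  by move=> y_gt0; rewrite mulrC divfK // lnK.
by rewrite !expK // start_mgf_gt0 // good_prob01.
Qed.

Definition hard_gap : R := psi_beta H beta * (start_mgf pg - start_mgf pb).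

Lemma hard_min_cgap : hard_gap != 0 -> is_min_cgap beta hardP hardr hard_gap.
Proof.
move=> gap_neq0; split.
  exists ord0, false, (~~ x), [ffun _ => (false, false)].
  by rewrite cgap_0 // /good_prob; case: x.
move=> i s a tau; have [i0|i_neq0] := eqVneq (val i) 0%N; last by rewrite cgap_tail ?eqxx.
by rewrite cgap_0 // /good_prob; case: (a == x); rewrite ?subrr ?mulr0 ?eqxx.
Qed.

Lemma hard_regret pi :
  regret beta hardr false hardP pi =
  if pi ord0 false == x then 0 else ln (start_mgf pg) / beta - ln (start_mgf pb) / beta.
Proof. by rewrite /regret Vstar_0 Vpi_0 /good_prob; case: (_ == x); rewrite ?subrr. Qed.

Lemma hard_valid : 0 <= c0 <= 1 -> valid_mdp hardP hardr.
Proof.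
move=> c01; split; [|split].
- move=> i s a s'; rewrite /hardP; case: (_ == _); last by case: (_ == _).
  by have := good_prob01 a; case: s'; lra.
- move=> i s a; rewrite big_bool /hardP; case: (_ == _); first by move=> /=; lra.
  by case: s; rewrite /= ?addr0 ?add0r.
- by move=> i s a; rewrite /hardr; case: (_ == _) => //; case: s; rewrite ?ler01 ?lexx.
Qed.

Definition jump_traj (s1 y : bool) : {ffun 'I_H -> bool} :=
  [ffun i : 'I_H => if val i == 0%N then s1 else y].

Lemma nxt_jump_traj s1 y i : nxt (jump_traj s1 y) i = y.
Proof.
rewrite /nxt; case: insubP => [j _ vj|]; rewrite ffunE; first by rewrite vj.
by case: eqP => // ->.
Qed.

Lemma trajprob_jump_traj (pi : policy bool bool H) s1 y :
  trajprob hardP s1 pi (jump_traj s1 y) =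
  if y then good_prob (pi ord0 s1) else 1 - good_prob (pi ord0 s1).
Proof.
rewrite /trajprob (_ : [forall i, _] = true); last first.
  by apply/forallP => i; apply/implyP => /eqP i0; rewrite ffunE i0.
rewrite mul1r (bigD1 ord0) //= big1 ?mulr1; first by rewrite hardP_0 // nxt_jump_traj ffunE.
move=> i /andP [_ i_neq_ord0].
have i_neq0 : val i != 0%N by apply: contra i_neq_ord0 => /eqP i0; apply/eqP/val_inj.
by rewrite hardP_tail // nxt_jump_traj ffunE (negbTE i_neq0) eqxx.
Qed.

Lemma trajprob_support (pi : policy bool bool H) s1 tau :
  trajprob hardP s1 pi tau != 0 -> tau = jump_traj s1 (tau (inord 1)).
Proof.
rewrite /trajprob; case: ifP => [/forallP start|]; last by rewrite mul0r eqxx.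
rewrite mul1r => prod_neq0.
have stay (j : 'I_H) : (j.+1 < H)%N -> val j != 0%N -> tau (inord j.+1) = tau j.
  move=> j_lt j_neq0.
  have : hardP j (tau j) (pi j (tau j)) (nxt tau j) != 0.
    by apply: contra prod_neq0 => /eqP P0; apply/prodf_eq0; exists j => //; rewrite P0.
  rewrite hardP_tail //; have [<- _|] := eqVneq (nxt tau j) (tau j); last by rewrite eqxx.
  rewrite /nxt; case: insubP => [k _ vk|]; last by rewrite j_lt.
  by congr (tau _); apply: val_inj; rewrite /= vk inordK.
have const k : (1 <= k)%N -> (k < H)%N -> tau (inord k) = tau (inord 1).
  elim: k => [//|[//|k] IH] _ k_lt.
  rewrite -IH // ?(ltnW k_lt) //.
  by have := stay (inord k.+1); rewrite /= inordK ?(ltnW k_lt) //; apply.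
apply/ffunP => i; rewrite ffunE; case: eqP => i0.
  by have /implyP/(_ (introT eqP i0))/eqP := start i.
by rewrite -(const i) ?inord_val // lt0n; apply/eqP.
Qed.

Lemma trajprob_ge0 (pi : policy bool bool H) s1 tau : 0 <= trajprob hardP s1 pi tau.
Proof.
have [-> //|/trajprob_support ->] := eqVneq (trajprob hardP s1 pi tau) 0.
by rewrite trajprob_jump_traj; have := good_prob01 (pi ord0 s1); case: (tau _); lra.
Qed.

Lemma sum_jump_traj (s1 : bool) (f : {ffun 'I_H -> bool} -> R) :
  (forall tau, f tau != 0 -> tau = jump_traj s1 (tau (inord 1))) ->
  \sum_tau f tau = f (jump_traj s1 true) + f (jump_traj s1 false).
Proof.
move=> f_support.
have jump_neq : jump_traj s1 false != jump_traj s1 true.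
  by apply/negP => /eqP /ffunP /(_ (inord 1)); rewrite !ffunE /= inordK.
rewrite (bigD1 (jump_traj s1 true)) //= (bigD1 (jump_traj s1 false)) //= big1 ?addr0 //.
move=> tau /andP [tau_neq1 tau_neq0]; apply/eqP; apply: contraT => /f_support tauE.
by move: tau_neq1 tau_neq0; rewrite tauE; case: (tau _); rewrite eqxx.
Qed.

Lemma sum_trajprob_hard (pi : policy bool bool H) s1 : \sum_tau trajprob hardP s1 pi tau = 1.
Proof.
rewrite (@sum_jump_traj s1) => [|tau]; last exact: trajprob_support.
by rewrite !trajprob_jump_traj subrKC.
Qed.

End HardInstance.

Lemma bhattacharyya_hard (R : realType) n (pg pb : R) (pi : policy bool bool n.+2) s1 :
  \sum_tau Num.sqrt (trajprob (hardP pg pb false) s1 pi tau * trajprob (hardP pg pb true) s1 pi tau)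
  = Num.sqrt (pg * pb) + Num.sqrt ((1 - pg) * (1 - pb)).
Proof.
rewrite (@sum_jump_traj _ n s1) => [|tau tau_neq0]; last first.
  apply: (trajprob_support (pi := pi) (pg := pg) (pb := pb) (x := true)).
  by apply: contra tau_neq0 => /eqP ->; rewrite mulr0 sqrtr0.
rewrite !trajprob_jump_traj /good_prob; case: (pi ord0 s1) => /=.
  by rewrite [pb * _]mulrC [(1 - pb) * _]mulrC.
by [].
Qed.

Lemma hard_instance_regret (R : realType) n (beta c0 pg pb D : R) (m K : nat) :
  beta != 0 -> 0 <= c0 <= 1 -> 0 <= pg <= 1 -> 0 <= pb <= 1 -> 0 < D ->
  hard_gap n beta c0 pg pb = D ->
  2 / 5 * D <= ln (start_mgf n beta c0 pg) / beta - ln (start_mgf n beta c0 pb) / beta ->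
  (m <= K)%N ->
  3 / 4 <= (Num.sqrt (pg * pb) + Num.sqrt ((1 - pg) * (1 - pb))) ^+ m ->
  forall alg : seq (obs R bool bool n.+2) -> policy bool bool n.+2 -> R, valid_alg alg ->
  exists (P : 'I_n.+2 -> bool -> bool -> bool -> R) (r : 'I_n.+2 -> bool -> bool -> R),
    valid_mdp P r /\ is_min_cgap beta P r D /\ D * m%:R / 20 <= ExpReg beta P r alg false K [::].
Proof.
move=> beta_neq0 c01 pg01 pb01 D_gt0 gapE Delta_ge mK rho_m alg alg_valid.
set Delta := _ - _ in Delta_ge; set rho := _ + _ in rho_m.
have Delta_ge0 : 0 <= Delta by apply: le_trans Delta_ge; lra.
have good_better : ln (start_mgf n beta c0 pb) / beta <= ln (start_mgf n beta c0 pg) / beta.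
  by rewrite -subr_ge0.
set r := hardr (n := n) c0.
have regretE := hard_regret (c0 := c0) _ good_better.
have regret_ge0 x pi : 0 <= regret beta r false (hardP pg pb x) pi.
  by rewrite regretE; case: (_ == _).
have regret_sep pi : Delta <= regret beta r false (hardP pg pb false) pi \/
                     Delta <= regret beta r false (hardP pg pb true) pi.
  by rewrite !regretE; case: (pi ord0 false); [left | right].
have traj_ge0 x pi tau : 0 <= trajprob (hardP (n := n) pg pb x) false pi tau.
  exact: trajprob_ge0.
have traj_le1 x pi : \sum_tau trajprob (hardP (n := n) pg pb x) false pi tau <= 1.
  by rewrite sum_trajprob_hard.
have bhattacharyya pi : rho <= \sum_tau Num.sqrt
    (trajprob (hardP (n := n) pg pb false) false pi tau * trajprob (hardP pg pb true) false pi tau).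
  by rewrite bhattacharyya_hard.
have := ExpReg_two_point_ge alg_valid Delta_ge0 (_ : 0 <= rho) (bhattacharyya_le1 pg01 pb01)
  (traj_ge0 false) (traj_ge0 true) (traj_le1 false) (traj_le1 true)
  (regret_ge0 false) (regret_ge0 true) regret_sep bhattacharyya.
move=> /(_ (addr_ge0 (sqrtr_ge0 _) (sqrtr_ge0 _)) _ _ mK rho_m) worse.
have target : D * m%:R / 20 <= Delta * m%:R / 8 by have := ler0n R m; nra.
have gap_neq0 : hard_gap n beta c0 pg pb != 0 by rewrite gapE gt_eqF.
rewrite -gapE in target *.
case: worse => [E_ge|E_ge]; [exists (hardP pg pb false), r | exists (hardP pg pb true), r].
all: split; [exact: hard_valid | split; [exact: hard_min_cgap | exact: le_trans E_ge]].
Qed.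

Lemma ln_sub_ge (R : realType) (y z : R) : 0 < y -> 0 < z -> (y - z) / y <= ln y - ln z.
Proof.
move=> y_gt0 z_gt0; have := expR_ge1Dx (ln z - ln y).
rewrite expRD expRN !lnK ?posrE // (_ : (y - z) / y = 1 - z / y); first lra.
by field; rewrite gt_eqF.
Qed.

Lemma expr_ge_bernoulli (R : realDomainType) (rho : R) m : 0 <= rho -> rho <= 1 ->
  1 - m%:R * (1 - rho) <= rho ^+ m.
Proof.
move=> rho_ge0 rho_le1; elim: m => [|m IH]; first by rewrite mul0r subr0.
rewrite exprS; apply: le_trans (ler_wpM2l rho_ge0 IH); rewrite -natr1.
have : 0 <= m%:R * ((1 - rho) * (1 - rho)) :> R by rewrite mulr_ge0 // mulr_ge0; lra.
nra.
Qed.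

Lemma sqrt_mul_addr_ge (R : rcfType) (p e : R) : 0 < p -> 0 <= e ->
  p + e / 2 - e ^+ 2 / (4 * p) <= Num.sqrt (p * (p + e)).
Proof.
move=> p_gt0 e_ge0; set g := Num.sqrt _.
have g_ge0 : 0 <= g := sqrtr_ge0 _.
have g2 : g ^+ 2 = p * (p + e) by rewrite sqr_sqrtr // mulr_ge0 //; lra.
have g_le : g <= (p + (p + e)) / 2 by apply: sqrt_mul_le_mid; lra.
have g_ge : 2 * p * (p + e) <= g * (2 * p + e) by nra.
have pe_gt0 : 0 < 4 * p * (2 * p + e) by rewrite !mulr_gt0 //; lra.
rewrite -(ler_pM2r pe_gt0).
have -> : (p + e / 2 - e ^+ 2 / (4 * p)) * (4 * p * (2 * p + e)) =
    (4 * p ^+ 2 + 2 * p * e - e ^+ 2) * (2 * p + e) by field; rewrite gt_eqF.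
have e3 : 0 <= e ^+ 3 by rewrite exprn_ge0.
nra.
Qed.

Lemma bhattacharyya_shift (R : rcfType) (s q e : R) : 0 < s -> 0 < q -> 0 <= e ->
  s + q + e = 1 ->
  1 - e ^+ 2 / (4 * s) - e ^+ 2 / (4 * q) <= Num.sqrt (s * (s + e)) + Num.sqrt (q * (q + e)).
Proof.
move=> s_gt0 q_gt0 e_ge0 sum1.
have := sqrt_mul_addr_ge s_gt0 e_ge0; have := sqrt_mul_addr_ge q_gt0 e_ge0; lra.
Qed.

Lemma ln_sub_ge_gap (R : realType) (a D w Y y z : R) :
  0 < a -> 0 < D -> 0 < w -> 0 < Y -> Y <= 9 / 4 -> 0 < z ->
  y = w * Y -> y - z = w * (a * D) -> 2 / 5 * D <= (ln y - ln z) / a.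
Proof.
move=> a_gt0 D_gt0 w_gt0 Y_gt0 Y_le z_gt0 yE yz.
have y_gt0 : 0 < y by rewrite yE mulr_gt0.
have := ln_sub_ge y_gt0 z_gt0; rewrite yz yE.
have -> : w * (a * D) / (w * Y) = a * D / Y by field; rewrite !gt_eqF.
rewrite ler_pdivlMr // => ln_ge; apply: le_trans ln_ge.
rewrite ler_pdivlMr //.
by have := mulr_gt0 a_gt0 D_gt0; nra.
Qed.

(* For beta > 0 the two first actions reach the rewarding state with probabilities s and s + eps
   (mirrored for beta < 0); eps (G - 1) = |beta| D makes the cascaded gap equal to D. *)
Section HardParameters.
Variables (R : realType) (n : nat) (a D s eps : R).
Local Notation G := (expR (a * (n.+1)%:R)).
Hypotheses (a_gt0 : 0 < a) (D_gt0 : 0 < D) (aD_le : a * D <= 1 / 4).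
Hypotheses (sG : s * (G + 1) = 1) (epsG : eps * (G - 1) = a * D) (eps_le : eps <= 1 / 24).
Local Notation rho := (Num.sqrt (s * (s + eps)) + Num.sqrt ((1 - s - eps) * (1 - s))).

Let G_gt1 : 1 < G. Proof. by rewrite expR_gt1 mulr_gt0. Qed.
Let s_gt0 : 0 < s. Proof. by have := sG; have := G_gt1; nra. Qed.
Let s_le : s <= 1 / 2. Proof. by have := sG; have := G_gt1; nra. Qed.
Let eps_gt0 : 0 < eps.
Proof. by have := epsG; have := G_gt1; have := mulr_gt0 a_gt0 D_gt0; nra. Qed.
Let reach_gt0 : 0 < 1 + (s + eps) * (G - 1).
Proof. by have := s_gt0; have := eps_gt0; have := G_gt1; nra. Qed.
Let reach_le : 1 + (s + eps) * (G - 1) <= 9 / 4.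
Proof. by rewrite mulrDl epsG; have := sG; have := s_gt0; have := aD_le; lra. Qed.

Lemma hard_bhattacharyya : 1 - 5 / 8 * eps ^+ 2 * (G + 1) <= rho.
Proof.
move: (G_gt1) (eps_gt0) (eps_le) (s_le) => G1 e0 e24 s2.
have q_ge : 11 / 24 <= 1 - s - eps by lra.
have := @bhattacharyya_shift _ s (1 - s - eps) eps s_gt0 ltac:(lra) (ltW eps_gt0).
rewrite (_ : 1 - s - eps + eps = 1 - s); last by ring.
move=> /(_ ltac:(ring)).
have -> : eps ^+ 2 / (4 * s) = eps ^+ 2 * (G + 1) / 4.
  have s_neq0 : s != 0 by rewrite gt_eqF.
  have -> : G + 1 = s^-1 by apply: (mulfI s_neq0); rewrite sG mulfV.
  by field.
have e2_ge0 : 0 <= eps ^+ 2 := sqr_ge0 eps.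
have : eps ^+ 2 / (4 * (1 - s - eps)) <= 3 / 8 * eps ^+ 2 * (G + 1).
  rewrite ler_pdivrMr; last by lra.
  have prod_ge1 : 1 <= 3 / 8 * (G + 1) * (4 * (1 - s - eps)).
    have : 0 <= (G - 1) * (1 - s - eps - 11 / 24) by apply: mulr_ge0; lra.
    lra.
  rewrite (_ : _ * _ * (4 * _) = eps ^+ 2 * (3 / 8 * (G + 1) * (4 * (1 - s - eps)))); last by ring.
  by rewrite -[X in X <= _]mulr1; apply: ler_wpM2l.
lra.
Qed.

Lemma hard_instance_pos m K : (m <= K)%N -> 3 / 4 <= rho ^+ m ->
  forall alg : seq (obs R bool bool n.+2) -> policy bool bool n.+2 -> R, valid_alg alg ->
  exists (P : 'I_n.+2 -> bool -> bool -> bool -> R) (r : 'I_n.+2 -> bool -> bool -> R),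
    valid_mdp P r /\ is_min_cgap a P r D /\ D * m%:R / 20 <= ExpReg a P r alg false K [::].
Proof.
move=> mK rho_m; move: (sG) (epsG) (eps_le) (G_gt1) (s_gt0) (eps_gt0) (s_le).
move=> sG' epsG' e24 G1 s0 e0 s2.
have startE x : start_mgf n a 0 x = 1 + x * (G - 1).
  by rewrite /start_mgf mulr0 expR0 mul1r; ring.
have gapE : 1 + (s + eps) * (G - 1) - (1 + s * (G - 1)) = 1 * (a * D).
  by rewrite -epsG; ring.
apply: (@hard_instance_regret _ n a 0 (s + eps) s) => //.
all: rewrite ?lexx ?ler01 ?gt_eqF //; try (apply/andP; split; lra).
- by rewrite /hard_gap /psi_beta a_gt0 !startE gapE; field; rewrite gt_eqF.
- rewrite -mulrBl !startE.
  apply: (ln_sub_ge_gap a_gt0 D_gt0 ltr01 reach_gt0 reach_le) => //; rewrite ?mul1r //.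
  have : 0 <= s * (G - 1) by apply: mulr_ge0; lra.
  lra.
- by rewrite [(s + eps) * s]mulrC opprD addrA.
Qed.

Lemma hard_instance_neg m K : (m <= K)%N -> 3 / 4 <= rho ^+ m ->
  forall alg : seq (obs R bool bool n.+2) -> policy bool bool n.+2 -> R, valid_alg alg ->
  exists (P : 'I_n.+2 -> bool -> bool -> bool -> R) (r : 'I_n.+2 -> bool -> bool -> R),
    valid_mdp P r /\ is_min_cgap (- a) P r D /\ D * m%:R / 20 <= ExpReg (- a) P r alg false K [::].
Proof.
move=> mK rho_m; move: (sG) (epsG) (eps_le) (G_gt1) (s_gt0) (eps_gt0) (s_le).
move=> sG' epsG' e24 G1 s0 e0 s2.
set W := expR (- a) / G.
have W_gt0 : 0 < W by rewrite divr_gt0 ?expR_gt0 //; lra.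
have startE x : start_mgf n (- a) 1 x = W * (x + G * (1 - x)).
  rewrite /W /start_mgf mulr1 mulNr !expRN; field; rewrite !gt_eqF ?expR_gt0 //; lra.
have gapE : (1 - s - eps + G * (1 - (1 - s - eps))) - (1 - s + G * (1 - (1 - s))) = a * D.
  by rewrite -epsG; ring.
apply: (@hard_instance_regret _ n (- a) 1 (1 - s) (1 - s - eps)) => //.
all: rewrite ?oppr_eq0 ?lexx ?ler01 ?gt_eqF //; try (apply/andP; split; lra).
- rewrite /hard_gap /psi_beta ltNge oppr_le0 (ltW a_gt0) /= !startE -mulrBr.
  rewrite opprK -opprB gapE /W -[(n.+2)%:R]natr1 mulrDr mulr1 expRD expRN; field.
  by rewrite !gt_eqF ?expR_gt0 //; lra.
- rewrite -mulrBl invrN mulrN -mulNr opprB !startE.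
  apply: (ln_sub_ge_gap a_gt0 D_gt0 W_gt0 reach_gt0 reach_le).
  + rewrite mulr_gt0 //; have : 0 <= G * s by apply: mulr_ge0; lra.
    lra.
  + by congr (_ * _); ring.
  + by rewrite -mulrBr gapE.
- have -> : (1 - (1 - s)) * (1 - (1 - s - eps)) = s * (s + eps) by ring.
  by rewrite [(1 - s) * _]mulrC addrC.
Qed.

Lemma hard_instance (beta : R) m K : `|beta| = a -> (m <= K)%N ->
  m%:R * (5 / 8 * eps ^+ 2 * (G + 1)) <= 1 / 4 ->
  forall alg : seq (obs R bool bool n.+2) -> policy bool bool n.+2 -> R, valid_alg alg ->
  exists (P : 'I_n.+2 -> bool -> bool -> bool -> R) (r : 'I_n.+2 -> bool -> bool -> R),
    valid_mdp P r /\ is_min_cgap beta P r D /\ D * m%:R / 20 <= ExpReg beta P r alg false K [::].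
Proof.
move=> beta_a mK m_small; move: (s_gt0) (eps_gt0) (s_le) (eps_le) => s0 e0 s2 e24.
have rho_m : 3 / 4 <= rho ^+ m.
  have rho_ge0 : 0 <= rho by rewrite addr_ge0 ?sqrtr_ge0.
  have rho_le1 : rho <= 1.
    have := @bhattacharyya_le1 _ s (s + eps) ltac:(lra) ltac:(lra).
    by rewrite [(1 - s) * _]mulrC opprD addrA.
  apply: le_trans (expr_ge_bernoulli m rho_ge0 rho_le1).
  have := ler_wpM2l (ler0n R m) (_ : 1 - rho <= 5 / 8 * eps ^+ 2 * (G + 1)).
  by have := hard_bhattacharyya; lra.
have [beta_gt0|beta_le0] := ltrP 0 beta.
  by rewrite (_ : beta = a); [exact: hard_instance_pos | rewrite -beta_a gtr0_norm].
by rewrite (_ : beta = - a); [exact: hard_instance_neg | rewrite -beta_a ler0_norm ?opprK].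
Qed.

End HardParameters.

Lemma exists_nat_between (R : archiRealFieldType) (c X : R) (K : nat) :
  0 < c -> 20 <= X -> c * X <= K%:R ->
  exists m : nat, [/\ (m <= K)%N, m%:R <= X / 5 & c / (1 + 10 * c) * X <= m%:R].
Proof.
move=> c_gt0 X_ge cX_le.
have k_le_c : c / (1 + 10 * c) <= c by rewrite ler_pdivrMr; nra.
have k_le : c / (1 + 10 * c) <= 1 / 10 by rewrite ler_pdivrMr; lra.
have /andP [trunc_le trunc_gt] := @trunc_itv _ (X / 5) ltac:(lra).
exists (minn K (Num.trunc (X / 5))); split; first exact: geq_minl.
  by apply: le_trans trunc_le; rewrite ler_nat geq_minr.
rewrite /minn; case: ltnP => _.
  by apply: le_trans cX_le; rewrite ler_wpM2r //; lra.
move: trunc_gt; rewrite -[(Num.trunc (X / 5)).+1]addn1 natrD => trunc_gt.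
have : c / (1 + 10 * c) * X <= 1 / 10 * X by rewrite ler_wpM2r //; lra.
lra.
Qed.

Lemma regret_lower_bound (R : realType) (c1 beta D X T : R) (H K : nat) :
  0 < c1 -> beta != 0 -> (2 <= H)%N -> 0 < D -> `|beta| * D <= 1 / 4 ->
  24 * (`|beta| * D) <= expR (`|beta| * (H%:R - 1)) - 1 ->
  X * (`|beta| * D) ^+ 2 * (expR (`|beta| * (H%:R - 1)) + 1) <=
    2 * (expR (`|beta| * (H%:R - 1)) - 1) ^+ 2 ->
  20 <= X -> c1 * X <= K%:R -> T <= c1 / (1 + 10 * c1) / 20 * (X * D) ->
  exists (S A : finType) (s1 : S),
  forall alg : seq (obs R S A H) -> policy S A H -> R, valid_alg alg ->
  exists (P : 'I_H -> S -> A -> S -> R) (r : 'I_H -> S -> A -> R),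
    valid_mdp P r /\ is_min_cgap beta P r D /\ T <= ExpReg beta P r alg s1 K [::].
Proof.
case: H => [|[|n]] // c1_gt0 beta_neq0 _ D_gt0 aD_le.
rewrite -[(n.+2)%:R]natr1 addrK.
set a := `|beta| in aD_le *; set G := expR (a * _) => eps_le X_le X_ge cX_le T_le.
have a_gt0 : 0 < a by rewrite normr_gt0.
have G_gt1 : 1 < G by rewrite expR_gt1 mulr_gt0.
have [m [mK mX kXm]] := exists_nat_between c1_gt0 X_ge cX_le.
exists bool, bool, false => alg alg_valid.
have sG : (G + 1)^-1 * (G + 1) = 1 by rewrite mulVf // gt_eqF //; lra.
have epsG : a * D / (G - 1) * (G - 1) = a * D by rewrite divfK // gt_eqF //; lra.
have eps_le' : a * D / (G - 1) <= 1 / 24 by rewrite ler_pdivrMr; lra.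
have m_small : m%:R * (5 / 8 * (a * D / (G - 1)) ^+ 2 * (G + 1)) <= 1 / 4.
  set t := 5 / 8 * _ * _.
  have t_ge0 : 0 <= t.
    by rewrite /t; apply: mulr_ge0; [apply: mulr_ge0; [lra | exact: sqr_ge0] | lra].
  have Xt_le : X * t <= 5 / 4.
    have -> : X * t = 5 / 8 * (X * (a * D) ^+ 2 * (G + 1)) / (G - 1) ^+ 2.
      by rewrite /t; field; rewrite gt_eqF //; lra.
    rewrite ler_pdivrMr; first lra.
    by rewrite exprn_gt0 //; lra.
  by have := ler_wpM2r t_ge0 mX; lra.
have [P [r [P_valid [P_gap P_regret]]]] :=
  hard_instance a_gt0 D_gt0 aD_le sG epsG eps_le' (erefl a) mK m_small alg_valid.
exists P, r; do !split => //; apply: le_trans T_le (le_trans _ P_regret).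
by have := ltW D_gt0; nra.
Qed.

Lemma regret_lower_bound_large_risk (R : realType) (c1 beta D : R) (H K : nat) :
  0 < c1 -> beta != 0 -> (2 <= H)%N -> 0 < D ->
  ln 4 <= `|beta| * (H%:R - 1) -> D <= (8 * `|beta|)^-1 ->
  c1 * ((expR (`|beta| * (H%:R - 1)) - 1) / (beta ^+ 2 * D ^+ 2)) <= K%:R ->
  exists (S A : finType) (s1 : S),
  forall alg : seq (obs R S A H) -> policy S A H -> R, valid_alg alg ->
  exists (P : 'I_H -> S -> A -> S -> R) (r : 'I_H -> S -> A -> R),
    valid_mdp P r /\ is_min_cgap beta P r D /\
    c1 / (1 + 10 * c1) / 20 * ((expR (`|beta| * (H%:R - 1)) - 1) / (beta ^+ 2 * D))
      <= ExpReg beta P r alg s1 K [::].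
Proof.
move=> c1_gt0 beta_neq0 H_ge2 D_gt0 G_ge D_le.
rewrite -(real_normK (num_real beta)).
set a := `|beta| in G_ge D_le *; set G := expR (a * _) in G_ge *.
have a_gt0 : 0 < a by rewrite normr_gt0.
have G_ge4 : 4 <= G by rewrite /G -[4]lnK ?posrE // ler_expR.
have aD_le : a * D <= 1 / 8.
  by move: D_le; rewrite invfM ler_pdivlMr // mulrC ler_pdivlMr //; lra.
have aD_gt0 : 0 < a * D by rewrite mulr_gt0.
set X := (G - 1) / (a ^+ 2 * D ^+ 2) => K_ge.
have XaD : X * (a * D) ^+ 2 = G - 1 by rewrite /X; field; rewrite !gt_eqF.
have XD : (G - 1) / (a ^+ 2 * D) = X * D by rewrite /X; field; rewrite !gt_eqF.
apply: (regret_lower_bound (c1 := c1) (X := X)) => //; rewrite -/a -/G ?XD //; try lra.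
- by rewrite XaD; nra.
- have : (a * D) ^+ 2 <= 1 / 64 by nra.
  by have := exprn_gt0 2 aD_gt0; nra.
Qed.

Lemma regret_lower_bound_small_risk (R : realType) (c1 beta D : R) (H K : nat) :
  0 < c1 -> beta != 0 -> (8 <= H)%N -> 0 < D ->
  `|beta| * (H%:R - 1) <= ln H%:R ->
  D <= (expR (`|beta| * (H%:R - 1)) - 1) / (4 * `|beta| * H%:R) ->
  c1 * ((expR (`|beta| * (H%:R - 1)) - 1) ^+ 2 / (H%:R * beta ^+ 2 * D ^+ 2)) <= K%:R ->
  exists (S A : finType) (s1 : S),
  forall alg : seq (obs R S A H) -> policy S A H -> R, valid_alg alg ->
  exists (P : 'I_H -> S -> A -> S -> R) (r : 'I_H -> S -> A -> R),
    valid_mdp P r /\ is_min_cgap beta P r D /\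
    c1 / (1 + 10 * c1) / 40 * (H%:R / D) <= ExpReg beta P r alg s1 K [::].
Proof.
move=> c1_gt0 beta_neq0 H_ge8 D_gt0 G_le D_le.
rewrite -(real_normK (num_real beta)).
set a := `|beta| in G_le D_le *; set G := expR (a * _) in G_le D_le *.
have H_ge : 8 <= H%:R :> R by rewrite (ler_nat R 8).
have a_gt0 : 0 < a by rewrite normr_gt0.
have aD_gt0 : 0 < a * D by rewrite mulr_gt0.
have G_le_H : G <= H%:R by rewrite -[X in _ <= X]lnK ?ler_expR // posrE; lra.
have G_ge : a * (H%:R - 1) <= G - 1 by have := expR_ge1Dx (a * (H%:R - 1)); rewrite -/G; lra.
have aDH : 4 * H%:R * (a * D) <= G - 1.
  by move: D_le; rewrite ler_pdivlMr; [lra | rewrite !mulr_gt0 //; lra].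
set X := (G - 1) ^+ 2 / (H%:R * a ^+ 2 * D ^+ 2) => K_ge.
have XaD : X * (a * D) ^+ 2 * H%:R = (G - 1) ^+ 2.
  by rewrite /X; field; rewrite !gt_eqF //; lra.
have H_le_XD : H%:R / D <= 2 * (X * D).
  rewrite ler_pdivrMr // -(ler_pM2r (_ : 0 < a ^+ 2 * H%:R)); last first.
    by rewrite mulr_gt0 ?exprn_gt0 //; lra.
  have -> : 2 * (X * D) * D * (a ^+ 2 * H%:R) = 2 * (X * (a * D) ^+ 2 * H%:R) by ring.
  rewrite XaD.
  have aH_ge0 : 0 <= a * (H%:R - 1) by apply: mulr_ge0; lra.
  have : (a * (H%:R - 1)) ^+ 2 <= (G - 1) ^+ 2 by rewrite ler_sqr ?nnegrE //; lra.
  have : 0 <= a ^+ 2 * (H%:R ^+ 2 - 4 * H%:R + 2) by apply: mulr_ge0; [exact: sqr_ge0 | nra].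
  nra.
have k_gt0 : 0 < c1 / (1 + 10 * c1) by rewrite divr_gt0 //; lra.
have aDH_gt0 : 0 < (a * D) ^+ 2 * H%:R by rewrite mulr_gt0 ?exprn_gt0 //; lra.
apply: (regret_lower_bound (c1 := c1) (X := X)) => //; rewrite -/a -/G.
- exact: leq_trans H_ge8.
- by nra.
- by nra.
- have Xa_ge0 : 0 <= X * (a * D) ^+ 2.
    by have := sqr_ge0 (G - 1); rewrite -XaD pmulr_lge0 //; lra.
  rewrite -XaD -mulrA [_ * H%:R]mulrC mulrA.
  have : 0 <= X * (a * D) ^+ 2 * (2 * H%:R - G - 1) by apply: mulr_ge0 => //; lra.
  lra.
- rewrite -(ler_pM2r aDH_gt0) [X * _]mulrA XaD.
  have : (4 * H%:R * (a * D)) ^+ 2 <= (G - 1) ^+ 2 by rewrite ler_sqr ?nnegrE; nra.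
  nra.
- by nra.
Qed.

Theorem theorem3 (R : realType) :
  (forall c1 c2 : R, 0 < c1 -> c1 <= c2 ->
   exists c : R, 0 < c /\
   forall (beta : R) (H : nat) (D : R) (K : nat),
     beta != 0 -> (2 <= H)%N -> 0 < D ->
     ln 4 <= `|beta| * (H%:R - 1) ->
     D <= (8 * `|beta|)^-1 ->
     c1 * ((expR (`|beta| * (H%:R - 1)) - 1) / (beta ^+ 2 * D ^+ 2)) <= K%:R ->
     K%:R <= c2 * ((expR (`|beta| * (H%:R - 1)) - 1) / (beta ^+ 2 * D ^+ 2)) ->
     exists (S A : finType) (s1 : S),
     forall alg : seq (obs R S A H) -> policy S A H -> R, valid_alg alg ->
     exists (P : 'I_H -> S -> A -> S -> R) (r : 'I_H -> S -> A -> R),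
       valid_mdp P r /\ is_min_cgap beta P r D /\
       c * ((expR (`|beta| * (H%:R - 1)) - 1) / (beta ^+ 2 * D))
         <= ExpReg beta P r alg s1 K [::])
  /\
  (forall c1 c2 : R, 0 < c1 -> c1 <= c2 ->
   exists c : R, 0 < c /\
   forall (beta : R) (H : nat) (D : R) (K : nat),
     beta != 0 -> (8 <= H)%N -> 0 < D ->
     `|beta| * (H%:R - 1) <= ln H%:R ->
     D <= (expR (`|beta| * (H%:R - 1)) - 1) / (4 * `|beta| * H%:R) ->
     c1 * ((expR (`|beta| * (H%:R - 1)) - 1) ^+ 2 / (H%:R * beta ^+ 2 * D ^+ 2))
       <= K%:R ->
     K%:R <= c2 * ((expR (`|beta| * (H%:R - 1)) - 1) ^+ 2
                     / (H%:R * beta ^+ 2 * D ^+ 2)) ->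
     exists (S A : finType) (s1 : S),
     forall alg : seq (obs R S A H) -> policy S A H -> R, valid_alg alg ->
     exists (P : 'I_H -> S -> A -> S -> R) (r : 'I_H -> S -> A -> R),
       valid_mdp P r /\ is_min_cgap beta P r D /\
       c * (H%:R / D) <= ExpReg beta P r alg s1 K [::]).
Proof.
split=> c1 c2 c1_gt0 _; have k_gt0 : 0 < c1 / (1 + 10 * c1) by rewrite divr_gt0 //; lra.
- exists (c1 / (1 + 10 * c1) / 20); split; first by rewrite divr_gt0.
  by move=> beta H D K *; apply: regret_lower_bound_large_risk.
- exists (c1 / (1 + 10 * c1) / 40); split; first by rewrite divr_gt0.
  by move=> beta H D K *; apply: regret_lower_bound_small_risk.
Qed.
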